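(* Let $\mathcal{C}$ be a skeletally small triangulated category and $H$ a $\mathbb{Q}$-subspace of $G(\mathcal{C})_{\mathbb{Q}}$. Then there exists a dense subcategory $\mathcal{D}$ of $\mathcal{C}$ such that the image of the (injective) natural map $G(\mathcal{D})_{\mathbb{Q}}\to G(\mathcal{C})_{\mathbb{Q}}$ equals $H$.
   Context: $G(\mathcal{C})$ is the Grothendieck group of the triangulated category $\mathcal{C}$ (free abelian group on isomorphism classes modulo $[V]=[U]+[W]$ for exact triangles $U\to V\to W\to U[1]$); $H_{\mathbb{Q}}=H\otimes_{\mathbb{Z}}\mathbb{Q}$. A dense subcategory is a triangulated subcategory $\mathcal{D}$ (full, closed under $[\pm1]$, isomorphisms and cones) such that for every $U\in\mathcal{C}$ there is $V$ with $U\oplus V\in\mathcal{D}$. *)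

From Stdlib Require Import List.
From HB Require Import structures.
From mathcomp Require Import all_boot all_order all_algebra.
Set Implicit Arguments.
Unset Strict Implicit.
Unset Printing Implicit Defensive.
Import GRing.Theory.
Local Open Scope ring_scope.

(* Preadditive category: Hom-sets are abelian groups, composition bilinear.
   Objects form a Type (a small collection), so the category is (skeletally) small. *)
Record preadd := PreAdd {
  Obj :> Type;
  Hom : Obj -> Obj -> zmodType;
  comp : forall X Y Z : Obj, Hom Y Z -> Hom X Y -> Hom X Z;
  idm : forall X : Obj, Hom X X;
  compA : forall X Y Z W (f : Hom Z W) (g : Hom Y Z) (h : Hom X Y),
      comp (comp f g) h = comp f (comp g h);
  comp1m : forall X Y (f : Hom X Y), comp (idm Y) f = f;
  compm1 : forall X Y (f : Hom X Y), comp f (idm X) = f;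
  compDl : forall X Y Z (f g : Hom Y Z) (h : Hom X Y),
      comp (f + g) h = comp f h + comp g h;
  compDr : forall X Y Z (f : Hom Y Z) (g h : Hom X Y),
      comp f (g + h) = comp f g + comp f h
}.
Arguments Hom {p}.
Arguments comp {p X Y Z}.
Arguments idm {p}.

Section PreaddDefs.
Variable C : preadd.

Definition is_iso (X Y : C) (f : Hom X Y) :=
  exists g : Hom Y X, comp g f = idm X /\ comp f g = idm Y.

Definition iso_obj (X Y : C) := exists f : Hom X Y, is_iso f.

Definition is_zero_obj (Z : C) :=
  forall X : C, (forall f : Hom Z X, f = 0) /\ (forall g : Hom X Z, g = 0).

Definition biproduct (X Y P : C) :=
  exists (i1 : Hom X P) (i2 : Hom Y P) (p1 : Hom P X) (p2 : Hom P Y),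
    [/\ comp p1 i1 = idm X, comp p2 i2 = idm Y, comp p1 i2 = 0,
        comp p2 i1 = 0 & comp i1 p1 + comp i2 p2 = idm P].

Variable S : C -> C.
Variable Sm : forall X Y : C, Hom X Y -> Hom (S X) (S Y).

Record triangle := Tri {
  t1 : C; t2 : C; t3 : C;
  tf : Hom t1 t2; tg : Hom t2 t3; th : Hom t3 (S t1) }.

Definition rotate (T : triangle) : triangle :=
  @Tri (t2 T) (t3 T) (S (t1 T)) (tg T) (th T) (- Sm (tf T)).

Definition tri_morph (T T' : triangle) (a : Hom (t1 T) (t1 T'))
    (b : Hom (t2 T) (t2 T')) (c : Hom (t3 T) (t3 T')) :=
  [/\ comp b (tf T) = comp (tf T') a,
      comp c (tg T) = comp (tg T') b &
      comp (Sm a) (th T) = comp (th T') c].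

Definition tri_iso (T T' : triangle) :=
  exists a b c, @tri_morph T T' a b c /\ is_iso a /\ is_iso b /\ is_iso c.

Variable dist : triangle -> Prop.

Definition TR1 :=
  [/\ (forall T T', tri_iso T T' -> dist T -> dist T'),
      (forall X Z : C, is_zero_obj Z -> dist (@Tri X X Z (idm X) 0 0) ) &
      (forall (X Y : C) (f : Hom X Y),
          exists Z (g : Hom Y Z) (h : Hom Z (S X)), dist (Tri f g h))].

Definition TR2 := forall T, dist T <-> dist (rotate T).

Definition TR3 := forall T T' a b, dist T -> dist T' ->
  comp b (tf T) = comp (tf T') a -> exists c, @tri_morph T T' a b c.

Definition TR4 := forall (X Y Z Q1 Q2 Q3 : C) (f : Hom X Y) (g : Hom Y Z)
    (p1 : Hom Y Q1) (d1 : Hom Q1 (S X))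
    (p2 : Hom Z Q2) (d2 : Hom Q2 (S X))
    (p3 : Hom Z Q3) (d3 : Hom Q3 (S Y)),
  dist (Tri f p1 d1) -> dist (Tri (comp g f) p2 d2) -> dist (Tri g p3 d3) ->
  exists (a : Hom Q1 Q2) (b : Hom Q2 Q3),
    [/\ dist (Tri a b (comp (Sm p1) d3)),
        comp a p1 = comp p2 g, comp d2 a = d1,
        comp b p2 = p3 & comp d3 b = comp (Sm f) d2].

End PreaddDefs.

Record triang := Triang {
  tcat :> preadd;
  shift : tcat -> tcat;
  shiftm : forall X Y : tcat, Hom X Y -> Hom (shift X) (shift Y);
  zero_ex : exists Z : tcat, is_zero_obj Z;
  biprod_ex : forall X Y : tcat, exists P, biproduct X Y P;
  shiftmD : forall (X Y : tcat) (f g : Hom X Y),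
      shiftm (f + g) = shiftm f + shiftm g;
  shiftm1 : forall X : tcat, shiftm (idm X) = idm (shift X);
  shiftmM : forall (X Y Z : tcat) (f : Hom Y Z) (g : Hom X Y),
      shiftm (comp f g) = comp (shiftm f) (shiftm g);
  shift_ff : forall X Y : tcat, bijective (@shiftm X Y);
  shift_ess : forall Y : tcat, exists X, iso_obj (shift X) Y;
  dist : triangle shift -> Prop;
  tr1 : TR1 shiftm dist;
  tr2 : TR2 shiftm dist;
  tr3 : TR3 shiftm dist;
  tr4 : TR4 shiftm dist
}.
Arguments shift {t}.
Arguments dist {t}.

Section GrothDefs.
Variable C : triang.

Definition additive_on (W : zmodType) (phi : C -> W) :=
  forall T : triangle shift, dist T -> phi (t2 T) = phi (t1 T) + phi (t3 T).

(* (V, cls) is the rationalized Grothendieck group G(C)_Q = G(C) (x)_Z Q,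
   characterized by its universal property: the initial Q-vector space
   with a map from objects that is additive on exact triangles. *)
Definition is_GQ (V : lmodType rat) (cls : C -> V) :=
  [/\ additive_on cls,
      (forall v : V, exists s : seq (rat * C),
          v = \sum_(p <- s) p.1 *: cls p.2) &
      (forall (W : lmodType rat) (phi : C -> W), additive_on phi ->
          exists psi : {linear V -> W}, forall X : C, psi (cls X) = phi X)].

(* Triangulated subcategory (full, given by a class of objects): closed
   under isomorphisms, [1], [-1] and cones. *)
Definition triang_subcat (D : C -> Prop) :=
  [/\ (forall X Y : C, iso_obj X Y -> D X -> D Y),
      (forall X : C, D X -> D (shift X)),
      (forall X : C, D (shift X) -> D X) &
      (forall T : triangle shift, dist T -> D (t1 T) -> D (t2 T) -> D (t3 T))].

Definition dense (D : C -> Prop) :=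
  triang_subcat D /\
  forall U : C, exists (V P : C), biproduct U V P /\ D P.

(* Image of the natural map G(D)_Q -> G(C)_Q, [X]_D |-> [X]_C: the
   Q-span of the classes of objects of D. *)
Definition GQ_image (V : lmodType rat) (cls : C -> V) (D : C -> Prop) (v : V) :=
  exists s : seq (rat * C), (forall p, In p s -> D p.2) /\
    v = \sum_(p <- s) p.1 *: cls p.2.

End GrothDefs.

(* Additivity on exact triangles makes [cls] constant on isomorphism classes,
   send [X[1]] to [- cls X] and a direct sum to the sum of the classes. Hence the objects whose class lies in a subgroup [H] form a
   triangulated subcategory, which is dense because [U (+) U[1]] has class 0.
   Since sums and negatives of classes are again classes, every rational
   combination of classes has a positive integer multiple that is a class; so
   every vector of [H] is a rational multiple of the class of an object of that
   subcategory, and its classes span exactly [H]. *)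
From HB Require Import structures.
From mathcomp Require Import all_boot all_order all_algebra.
From mathcomp Require Import zify.
Set Implicit Arguments.
Unset Strict Implicit.
Unset Printing Implicit Defensive.
Import GRing.Theory.
Local Open Scope ring_scope.

Section Preadditive.
Variable C : preadd.

Lemma compm0 (X Y Z : C) (f : Hom Y Z) : comp f (0 : Hom X Y) = 0.
Proof. by apply: (addrI (comp f 0)); rewrite -compDr !addr0. Qed.

Lemma comp0m (X Y Z : C) (f : Hom X Y) : comp (0 : Hom Y Z) f = 0.
Proof. by apply: (addrI (comp 0 f)); rewrite -compDl !addr0. Qed.

Lemma compNm (X Y Z : C) (f : Hom Y Z) (g : Hom X Y) :
  comp (- f) g = - comp f g.
Proof. by apply/eqP; rewrite -addr_eq0 -compDl addNr comp0m. Qed.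

Lemma idm_eq0_zero_obj (X : C) : idm X = 0 -> is_zero_obj X.
Proof.
move=> X0 Y; split=> [f|g]; first by rewrite -(compm1 f) X0 compm0.
by rewrite -(comp1m g) X0 comp0m.
Qed.

End Preadditive.

Section Triangulated.
Variable C : triang.

Lemma shiftm0 (X Y : C) : shiftm (0 : Hom X Y) = 0.
Proof. by apply: (addrI (shiftm (0 : Hom X Y))); rewrite -shiftmD !addr0. Qed.

Lemma zero_obj_shift (Z : C) : is_zero_obj Z -> is_zero_obj (shift Z).
Proof.
move=> Z0; apply: idm_eq0_zero_obj.
by rewrite -shiftm1 (proj1 (Z0 Z) (idm Z)) shiftm0.
Qed.

Lemma dist_idm (X Z : C) : is_zero_obj Z -> dist (@Tri _ shift X X Z (idm X) 0 0).
Proof. by case: (tr1 C) => _ + _; apply. Qed.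

Lemma dist_rotate (T : triangle (@shift C)) : dist T -> dist (rotate (@shiftm C) T).
Proof. by move/(tr2 T). Qed.

Lemma dist_comp_eq0 (T : triangle (@shift C)) : dist T -> comp (tg T) (tf T) = 0.
Proof.
move=> distT; have [Z Z0] := zero_ex C.
have [c [_ cE _]] := @tr3 C (Tri (idm (t1 T)) 0 0) T (idm _) (tf T) (dist_idm _ Z0) distT erefl.
by rewrite -cE /= compm0.
Qed.

(* Map [T] to the distinguished triangle [0 -> Y = Y -> 0] with TR3. *)
Lemma dist_weak_coker (T : triangle (@shift C)) (Y : C) (x : Hom (t2 T) Y) :
  dist T -> comp x (tf T) = 0 -> exists c : Hom (t3 T) Y, comp c (tg T) = x.
Proof.
move=> distT xf0; have [Z Z0] := zero_ex C.
pose T' := @Tri _ shift Z Y Y 0 (idm Y) 0.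
have distT' : dist T'.
  apply/(tr2 T'); rewrite /rotate /= shiftm0 oppr0.
  exact/dist_idm/zero_obj_shift.
have [|c [_ cE _]] := @tr3 C T T' 0 x distT distT'; first by rewrite xf0 compm0.
by exists c; rewrite cE /= comp1m.
Qed.

Lemma dist_split_th_eq0 (T : triangle (@shift C)) (p : Hom (t2 T) (t1 T)) :
  dist T -> comp p (tf T) = idm (t1 T) -> th T = 0.
Proof.
move=> distT pf1.
have := dist_comp_eq0 (dist_rotate (dist_rotate distT)).
rewrite /= compNm => /eqP; rewrite oppr_eq0 => /eqP fh0.
by rewrite -(comp1m (th T)) -shiftm1 -pf1 shiftmM compA fh0 compm0.
Qed.

Lemma dist_tg_epi (T : triangle (@shift C)) (Y : C) (x : Hom (t3 T) Y) :
  dist T -> th T = 0 -> comp x (tg T) = 0 -> x = 0.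
Proof.
move=> distT h0 xg0.
have [e <-] := dist_weak_coker (dist_rotate distT) xg0.
by rewrite /= h0 compm0.
Qed.

Lemma dist_biproduct (U V P : C) (i1 : Hom U P) (i2 : Hom V P)
    (p1 : Hom P U) (p2 : Hom P V) :
  comp p1 i1 = idm U -> comp p2 i2 = idm V -> comp p1 i2 = 0 ->
  comp p2 i1 = 0 -> comp i1 p1 + comp i2 p2 = idm P ->
  dist (@Tri _ shift U P V i1 p2 0).
Proof.
move=> p1i1 p2i2 p1i2 p2i1 sumP.
have [iso_dist _ cone_ex] := tr1 C.
have [W [g [h distT]]] := cone_ex U P i1.
have h0 : h = 0 := dist_split_th_eq0 distT p1i1.
have [c /= cg] := dist_weak_coker distT p2i1.
have gi1 : comp g i1 = 0 := dist_comp_eq0 distT.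
have gi2c : comp (comp g i2) c = idm W.
  apply/eqP; rewrite -subr_eq0; apply/eqP/(dist_tg_epi distT h0).
  rewrite compDl compNm comp1m !compA cg.
  have -> : comp g (comp i2 p2) = g.
    by rewrite -{2}(compm1 g) -sumP compDr -(compA g i1) gi1 comp0m add0r.
  by rewrite subrr.
apply: iso_dist distT; exists (idm U), (idm P), c; split.
  by split; rewrite /= ?comp1m ?compm1 ?cg // shiftm1 comp1m h0 comp0m.
split; first by exists (idm U); rewrite comp1m.
split; first by exists (idm P); rewrite comp1m.
by exists (comp g i2); split=> //; rewrite -compA cg.
Qed.

End Triangulated.

Section AdditiveFunctions.
Variables (C : triang) (W : zmodType) (cls : C -> W).
Hypothesis cls_add : additive_on cls.

Lemma cls_zero_obj (Z : C) : is_zero_obj Z -> cls Z = 0.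
Proof.
move=> Z0; apply: (addrI (cls Z)).
by rewrite addr0 [RHS](cls_add (dist_idm Z Z0)).
Qed.

Lemma cls_iso (X Y : C) : iso_obj X Y -> cls X = cls Y.
Proof.
move=> [f [g [gf fg]]]; have [Z Z0] := zero_ex C.
have [iso_dist _ _] := tr1 C.
have distT : dist (@Tri _ shift X Y Z f 0 0).
  apply: iso_dist (dist_idm X Z0); exists (idm X), f, (idm Z); split.
    by split; rewrite /= ?comp1m ?compm1 ?compm0 ?comp0m.
  split; first by exists (idm X); rewrite comp1m.
  split; first by exists g.
  by exists (idm Z); rewrite comp1m.
by rewrite [RHS](cls_add distT) /= (cls_zero_obj Z0) addr0.
Qed.

Lemma cls_shift (X : C) : cls (shift X) = - cls X.
Proof.
have [Z Z0] := zero_ex C.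
have := cls_add (dist_rotate (dist_idm X Z0)); rewrite /= (cls_zero_obj Z0).
by move=> E; apply/eqP; rewrite -addr_eq0 addrC -E.
Qed.

Lemma cls_biproduct (U V P : C) : biproduct U V P -> cls P = cls U + cls V.
Proof.
move=> [i1 [i2 [p1 [p2 [E1 E2 E3 E4 E5]]]]].
exact: (cls_add (dist_biproduct E1 E2 E3 E4 E5)).
Qed.

Lemma cls_mulrn (X : C) (n : nat) : exists Y, cls Y = cls X *+ n.
Proof.
elim: n => [|n [Y YE]].
  by have [Z Z0] := zero_ex C; exists Z; apply: cls_zero_obj.
have [P XYP] := biprod_ex X Y.
by exists P; rewrite (cls_biproduct XYP) YE mulrS.
Qed.

Lemma cls_mulrz (X : C) (k : int) : exists Y, cls Y = cls X *~ k.
Proof.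
case: k => n; first exact: cls_mulrn.
have [Y YE] := cls_mulrn X n.+1.
by exists (shift Y); rewrite cls_shift YE NegzE mulrNz.
Qed.

Section ClassPreimage.
Variable H : {pred W}.
Hypothesis H_zmod : zmod_closed H.
HB.instance Definition _ := GRing.isZmodClosed.Build W H H_zmod.

Lemma triang_subcat_cls_preimage : triang_subcat (fun X => cls X \in H).
Proof.
split=> [X Y /cls_iso <- //|X|X|T distT H1 H2].
- by rewrite cls_shift rpredN.
- by rewrite cls_shift rpredN.
have -> : cls (t3 T) = cls (t2 T) - cls (t1 T).
  by rewrite (cls_add distT) addrAC subrr add0r.
exact: rpredB.
Qed.

Lemma dense_cls_preimage : dense (fun X => cls X \in H).
Proof.
split; first exact: triang_subcat_cls_preimage.
move=> U; have [P HP] := biprod_ex U (shift U).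
by exists (shift U), P; rewrite (cls_biproduct HP) cls_shift subrr rpred0.
Qed.

End ClassPreimage.

End AdditiveFunctions.

Section RationalClasses.
Variables (C : triang) (V : lmodType rat) (cls : C -> V).
Hypothesis cls_add : additive_on cls.

Lemma cls_comb_mulrn (s : seq (rat * C)) :
  exists (n : nat) (Y : C), (\sum_(p <- s) p.1 *: cls p.2) *+ n.+1 = cls Y.
Proof.
elim: s => [|[q X] s [m [Y YE]]].
  have [Z Z0] := zero_ex C; exists 0%N, Z.
  by rewrite big_nil mul0rn (cls_zero_obj cls_add Z0).
have [d dE] : exists d : nat, denq q = d.+1%:Z.
  by have := denq_gt0 q; case: (denq q) => [[|d]|d] // _; exists d.
have qXE : (q *: cls X) *+ d.+1 = cls X *~ numq q.
  by rewrite scalerMnl -scaler_int numqE dE -mulr_natr.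
have [X1 X1E] := cls_mulrz cls_add X (numq q).
have [X2 X2E] := cls_mulrn cls_add X1 m.+1.
have [Y2 Y2E] := cls_mulrn cls_add Y d.+1.
have [P HP] := biprod_ex X2 Y2.
exists (d * m + d + m)%N, P.
rewrite (cls_biproduct cls_add HP) X2E Y2E X1E -qXE -YE big_cons /=.
have -> : (d * m + d + m).+1 = (d.+1 * m.+1)%N by lia.
by rewrite mulrnDl mulrnA; congr (_ + _); rewrite mulnC mulrnA.
Qed.

Section SubspacePreimage.
Variable H : {pred V}.
Hypothesis H_submod : submod_closed H.
HB.instance Definition _ := GRing.isSubmodClosed.Build rat V H H_submod.

Lemma GQ_image_cls_preimage :
  (forall v : V, exists s : seq (rat * C), v = \sum_(p <- s) p.1 *: cls p.2) ->
  forall v : V, v \in H <-> GQ_image cls (fun X => cls X \in H) v.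
Proof.
move=> cls_span v; split=> [Hv|[s [sH ->]]]; last first.
  elim: s sH => [|p s IH] sH; first by rewrite big_nil rpred0.
  rewrite big_cons rpredD ?rpredZ ?IH //; first by apply: sH; left.
  by move=> p' s_p'; apply: sH; right.
have [s vE] := cls_span v; have [n [Y YE]] := cls_comb_mulrn s.
rewrite -vE -scaler_nat in YE.
exists [:: (n.+1%:R^-1, Y)]; split=> [p [<-|[]] /=|].
  by rewrite -YE rpredZ.
rewrite big_seq1 /= -YE scalerA mulVf ?scale1r //.
by rewrite Num.Theory.pnatr_eq0.
Qed.

End SubspacePreimage.

End RationalClasses.

Theorem lemma3p3 (C : triang) (V : lmodType rat) (cls : C -> V)
    (HG : is_GQ cls) (H : {pred V}) (HH : GRing.submod_closed H) :
  exists D : C -> Prop, dense D /\ (forall v : V, v \in H <-> GQ_image cls D v).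
Proof.
case: HG => cls_add cls_span _.
exists (fun X => cls X \in H); split.
  exact (dense_cls_preimage cls_add (GRing.submod_closedB HH)).
exact: GQ_image_cls_preimage.
Qed.
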